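(* Let $\mathcal H_a,\mathcal H_b$ be finite-dimensional Hilbert spaces and let $H$ be a Hermitian operator on $\mathcal H_a\otimes\mathcal H_b$. Then $$\mathcal C_{\rm P}^{1}(H)=\|H\|_\infty-\big(\Delta E_{\rm Sep}(H)+\Delta E_{\rm Sep}(-H)\big).$$
   Context: For a density operator $\rho$ on $\mathcal H_a\otimes\mathcal H_b$, the parallel capacity is $\mathcal C_{\rm P}(\rho,H):=\max_{U_a,U_b}\mathrm{tr}[(U_a\otimes U_b)\rho(U_a\otimes U_b)^\dagger H]-\min_{U_a,U_b}\mathrm{tr}[(U_a\otimes U_b)\rho(U_a\otimes U_b)^\dagger H]$, where $U_a,U_b$ range over all unitaries on $\mathcal H_a$, $\mathcal H_b$ respectively. Let $\mathcal S^1$ be the set of separable density operators on $\mathcal H_a\otimes\mathcal H_b$ (convex hull of product states $\rho_a\otimes\rho_b$), and $\mathcal C_{\rm P}^1(H):=\max_{\rho\in\mathcal S^1}\mathcal C_{\rm P}(\rho,H)$. Let $E_0$ and $E_{\max}$ denote the smallest and largest eigenvalues of $H$, and set $\|H\|_\infty:=E_{\max}-E_0$. The entanglement gap energy is $\Delta E_{\rm Sep}(H):=\min_{\rho\in\mathcal S^1}\mathrm{tr}[\rho H]-E_0$ (and $\Delta E_{\rm Sep}(-H)$ is the same quantity for $-H$, whose smallest eigenvalue is $-E_{\max}$). *)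

From HB Require Import structures.
From mathcomp Require Import all_boot all_order all_algebra.
From mathcomp Require Import spectral complex mxtens.
From mathcomp Require Import classical_sets reals.
Set Implicit Arguments.
Unset Strict Implicit.
Unset Printing Implicit Defensive.
Import Order.TTheory GRing.Theory Num.Theory.
Local Open Scope ring_scope.
Local Open Scope classical_set_scope.

Section QDefs.
Variable R : realType.
Local Notation C := R[i].

Definition adj m n (A : 'M[C]_(m, n)) : 'M[C]_(n, m) := map_mx Num.conj (trmx A).

Definition hermitian_op n (A : 'M[C]_n) : Prop := adj A = A.

Definition psd n (A : 'M[C]_n) : Prop :=
  hermitian_op A /\ forall v : 'rV[C]_n, 0 <= (v *m A *m adj v) 0 0.

Definition density n (rho : 'M[C]_n) : Prop := psd rho /\ \tr rho = 1.

Definition separable m n (rho : 'M[C]_(m * n)) : Prop :=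
  exists (k : nat) (p : 'I_k -> R) (ra : 'I_k -> 'M[C]_m) (rb : 'I_k -> 'M[C]_n),
    [/\ forall i, 0 <= p i,
        \sum_(i < k) p i = 1,
        forall i, density (ra i) /\ density (rb i)
      & rho = \sum_(i < k) (p i)%:C%C *: tensmx (ra i) (rb i)].

(* tr[(Ua (x) Ub) rho (Ua (x) Ub)^dagger H] (real part; it is real for Hermitian rho, H) *)
Definition energy m n (H rho : 'M[C]_(m * n)) (Ua : 'M[C]_m) (Ub : 'M[C]_n) : R :=
  let U := tensmx Ua Ub in complex.Re (\tr (U *m rho *m adj U *m H)).

Definition local_energies m n (H rho : 'M[C]_(m * n)) : set R :=
  [set x | exists (Ua : 'M[C]_m) (Ub : 'M[C]_n),
     [/\ Ua \is unitarymx, Ub \is unitarymx & x = energy H rho Ua Ub]].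

Definition CP m n (rho H : 'M[C]_(m * n)) : R :=
  sup (local_energies H rho) - inf (local_energies H rho).

Definition CP1 m n (H : 'M[C]_(m * n)) : R :=
  sup [set x | exists rho, separable rho /\ x = CP rho H].

Definition Emin n (H : 'M[C]_n) : R := inf [set x : R | eigenvalue H x%:C%C].
Definition Emax n (H : 'M[C]_n) : R := sup [set x : R | eigenvalue H x%:C%C].

Definition DeltaESep m n (H : 'M[C]_(m * n)) : R :=
  inf [set x | exists rho, separable rho /\ x = complex.Re (\tr (rho *m H))] - Emin H.

End QDefs.

From HB Require Import structures.
From mathcomp Require Import all_boot all_order all_algebra.
From mathcomp Require Import spectral complex mxtens.
From mathcomp Require Import classical_sets reals.
From mathcomp Require Import lra.
Import Order.TTheory GRing.Theory Num.Theory.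
Local Open Scope ring_scope.
Local Open Scope classical_set_scope.
Set Implicit Arguments.
Unset Strict Implicit.

(* Both sides equal the width [sup S - inf S] of the set S of energies
   tr(rho H) of separable states rho.  On the right the eigenvalue terms
   cancel, since inf S(-H) = - sup S(H) and E_0(-H) = - E_max(H).  On the
   left, local unitaries preserve separability, so C_P(rho, H) <= sup S - inf S
   for separable rho.  Conversely, by the spectral theorem every separable state
   is a convex mixture of pure product states, and these form the local unitary
   orbit of a single pure product state rho0; hence the local energies of rho0
   already reach both extremes of S, and C_P(rho0, H) = sup S - inf S. *)

Lemma tensmx_sumZl (K : comPzRingType) m n p q N (c : 'I_N -> K)
    (A : 'I_N -> 'M[K]_(m, n)) (B : 'M[K]_(p, q)) :
  (\sum_(i < N) c i *: A i) *t B = \sum_(i < N) c i *: (A i *t B).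
Proof.
apply/matrixP => a b; rewrite !(mxE, summxE) mulr_suml; apply: eq_bigr => i _.
by rewrite !mxE mulrA.
Qed.

Lemma tensmx_sumZr (K : comPzRingType) m n p q N (c : 'I_N -> K)
    (A : 'M[K]_(m, n)) (B : 'I_N -> 'M[K]_(p, q)) :
  A *t (\sum_(i < N) c i *: B i) = \sum_(i < N) c i *: (A *t B i).
Proof.
apply/matrixP => a b; rewrite !(mxE, summxE) mulr_sumr; apply: eq_bigr => i _.
by rewrite !mxE mulrCA.
Qed.

Lemma sup_attained (R : realType) (E : set R) x : E x -> ubound E x -> sup E = x.
Proof.
move=> Ex ubx; apply/le_anti/andP; split; first by apply: ge_sup => //; exists x.
by apply: ub_le_sup => //; exists x.
Qed.

Section Quantum.
Variable R : realType.
Local Notation C := R[i].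

Lemma adjM m n p (A : 'M[C]_(m, n)) (B : 'M[C]_(n, p)) :
  adj (A *m B) = adj B *m adj A.
Proof. by rewrite /adj trmx_mul map_mxM. Qed.

Lemma adjK m n (A : 'M[C]_(m, n)) : adj (adj A) = A.
Proof. exact: trmxCK. Qed.

Lemma adj_tens m n p q (A : 'M[C]_(m, n)) (B : 'M[C]_(p, q)) :
  adj (A *t B) = adj A *t adj B.
Proof. by rewrite /adj trmx_tens map_mxT. Qed.

Lemma adjE m n (A : 'M[C]_(m, n)) i j : adj A i j = (A j i)^*.
Proof. by rewrite !mxE. Qed.

Lemma adj_unitarymx k (W : 'M[C]_k) : W \is unitarymx -> adj W \is unitarymx.
Proof. by rewrite trmxC_unitary. Qed.

Lemma unitarymx1 k : (1%:M : 'M[C]_k) \is unitarymx.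
Proof. by apply/unitarymxP; rewrite trmx1 map_mx1 mulmx1. Qed.

Lemma xrow_unitarymx k (W : 'M[C]_k) i j :
  W \is unitarymx -> xrow i j W \is unitarymx.
Proof.
move=> Wu; rewrite xrowE; apply: mul_unitarymx => //.
apply/unitarymxP; rewrite tr_tperm_mx map_tperm_mx /tperm_mx -perm_mxM perm.tperm2.
exact: perm_mx1.
Qed.

Lemma Re_sum I (r : seq I) (P : pred I) (F : I -> C) :
  complex.Re (\sum_(i <- r | P i) F i) = \sum_(i <- r | P i) complex.Re (F i).
Proof. exact: (raddf_sum (@complex.Re R : Rcomplex R -> R)). Qed.

Lemma ReN (z : C) : complex.Re (- z) = - complex.Re z.
Proof. exact: (raddfN (@complex.Re R : Rcomplex R -> R)). Qed.

Lemma Re_realM (c : R) (z : C) : complex.Re (c%:C%C * z) = c * complex.Re z.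
Proof. by case: z => a b /=; rewrite mul0r subr0. Qed.

Lemma ler_Re (x y : C) : x <= y -> complex.Re x <= complex.Re y.
Proof. by rewrite lecE => /andP[]. Qed.

Lemma normr_Re_le (z : C) : `|complex.Re z| <= complex.Re `|z|.
Proof.
rewrite normc_def /= -sqrtr_sqr ler_sqrt; last by rewrite addr_ge0 // sqr_ge0.
by rewrite lerDl sqr_ge0.
Qed.

Definition expectation n (H rho : 'M[C]_n) : R := complex.Re (\tr (rho *m H)).

Lemma expectation_sumZ n (H : 'M[C]_n) N (c : 'I_N -> R) (M : 'I_N -> 'M[C]_n) :
  expectation H (\sum_(i < N) (c i)%:C%C *: M i) = \sum_(i < N) c i * expectation H (M i).
Proof.
rewrite /expectation mulmx_suml (raddf_sum (@mxtrace _ n)) Re_sum; apply: eq_bigr => i _.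
rewrite -scalemxAl -Re_realM /mxtrace mulr_sumr; congr complex.Re.
by apply: eq_bigr => j _; rewrite mxE.
Qed.

Lemma expectation_conv_bound n (H : 'M[C]_n) N (c : 'I_N -> R) (M : 'I_N -> 'M[C]_n) lo hi :
  (forall i, 0 <= c i) -> \sum_(i < N) c i = 1 ->
  (forall i, lo <= expectation H (M i) <= hi) ->
  lo <= expectation H (\sum_(i < N) (c i)%:C%C *: M i) <= hi.
Proof.
move=> c_ge0 c_sum1 M_range; rewrite expectation_sumZ.
rewrite -[lo]mul1r -[hi]mul1r -c_sum1 !mulr_suml.
by apply/andP; split; apply: ler_sum => i _; apply: ler_wpM2l => //;
  case/andP: (M_range i).
Qed.

Lemma expectationN n (H rho : 'M[C]_n) : expectation (- H) rho = - expectation H rho.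
Proof. by rewrite /expectation mulmxN linearN ReN. Qed.

Definition row_state k (i : 'I_k) (W : 'M[C]_k) : 'M[C]_k := adj (row i W) *m row i W.

Lemma row_unitary k (W : 'M[C]_k) i :
  W \is unitarymx -> row i W *m adj (row i W) = 1%:M.
Proof.
move=> /row_unitarymxP Wu; rewrite [LHS]mx11_scalar -dotmxE Wu eqxx.
by apply/matrixP => a b; rewrite !ord1 !mxE.
Qed.

Lemma quad_adj_ge0 n (v : 'rV[C]_n) : 0 <= (v *m adj v) 0 0.
Proof. by rewrite mxE sumr_ge0 // => j _; rewrite adjE mul_conjC_ge0. Qed.

Lemma row_state_density k (i : 'I_k) W : W \is unitarymx -> density (row_state i W).
Proof.
move=> Wu; split; first split.
- by rewrite /hermitian_op /row_state adjM adjK.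
- move=> v; rewrite /row_state !mulmxA -[v *m _ *m _ *m _]mulmxA.
  have -> : row i W *m adj v = adj (v *m adj (row i W)) by rewrite adjM adjK.
  exact: quad_adj_ge0.
- by rewrite /row_state mxtrace_mulC row_unitary // mxtrace1.
Qed.

Lemma row_state_conj k (i : 'I_k) (W : 'M[C]_k) :
  adj W *m row_state i 1%:M *m W = row_state i W.
Proof.
rewrite /row_state; have -> : row i W = row i 1%:M *m W by rewrite -row_mul mul1mx.
by rewrite adjM !mulmxA.
Qed.

Lemma density_unitary_conj k (U rho : 'M[C]_k) :
  U \is unitarymx -> density rho -> density (U *m rho *m adj U).
Proof.
move=> Uu [[rho_herm rho_ge0] rho_tr]; split; first split.
- by rewrite /hermitian_op !adjM adjK rho_herm mulmxA.
- by move=> v; have := rho_ge0 (v *m U); rewrite !adjM !mulmxA.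
- rewrite mxtrace_mulC mulmxA.
  have -> : adj U *m U = 1%:M by apply: mulmx1C; exact/unitarymxP.
  by rewrite mul1mx.
Qed.

Lemma mulmx_diag_sum m k n (A : 'M[C]_(m, k)) (s : 'rV[C]_k) (B : 'M[C]_(k, n)) :
  A *m diag_mx s *m B = \sum_(i < k) s 0 i *: (col i A *m row i B).
Proof.
apply/matrixP => a b; rewrite mul_mx_diag summxE !mxE; apply: eq_bigr => i _.
by rewrite !mxE big_ord1 !mxE mulrCA mulrA.
Qed.

Lemma row_quad_entry m n p (A : 'M[C]_(m, n)) (B : 'M[C]_n) (A' : 'M[C]_(p, n)) i j :
  (row i A *m B *m adj (row j A')) 0 0 = (A *m B *m adj A') i j.
Proof.
rewrite -!row_mul; have -> : adj (row j A') = col j (adj A').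
  by apply/matrixP => a b; rewrite !mxE.
by rewrite !mxE; apply: eq_bigr => l _; rewrite !mxE.
Qed.

(* Spectral decomposition; the row index [i0] is fixed by swapping row [i]
   of the eigenbasis into position [i0]. *)
Lemma density_row_state_decomp k (i0 : 'I_k) (rho : 'M[C]_k) : density rho ->
  exists (d : 'I_k -> R) (W : 'I_k -> 'M[C]_k),
  [/\ forall i, 0 <= d i, \sum_(i < k) d i = 1, forall i, W i \is unitarymx
    & rho = \sum_(i < k) (d i)%:C%C *: row_state i0 (W i)].
Proof.
move=> [[rho_herm rho_ge0] rho_tr].
have rho_normal : rho \is normalmx by apply/normalmxP; rewrite -/(adj rho) rho_herm.
have rhoE := orthomx_spectralP rho_normal.
set P := spectralmx rho in rhoE; set sp := spectral_diag rho in rhoE.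
have Pu : P \is unitarymx by exact: spectral_unitarymx.
have Pinv : invmx P = adj P by rewrite invmx_unitary.
have PPadj : P *m adj P = 1%:M by exact/unitarymxP.
have spE i : sp 0 i = (row i P *m rho *m adj (row i P)) 0 0.
  rewrite row_quad_entry {1}rhoE Pinv !mulmxA PPadj mul1mx -mulmxA PPadj mulmx1.
  by rewrite mxE eqxx mulr1n.
have sp_ge0 i : 0 <= sp 0 i by rewrite spE; exact: rho_ge0.
have sp_real i : sp 0 i = (complex.Re (sp 0 i))%:C%C.
  by have := ger0_Im (sp_ge0 i); case: (sp 0 i) => a b /= ->.
exists (fun i => complex.Re (sp 0 i)), (fun i => xrow i0 i P); split.
- by move=> i; have := sp_ge0 i; rewrite {1}sp_real lecR.
- have : complex.Re (\tr rho) = 1 by rewrite rho_tr.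
  by rewrite rhoE mxtrace_mulC mulmxA Pinv PPadj mul1mx mxtrace_diag Re_sum.
- by move=> i; exact: xrow_unitarymx.
- rewrite {1}rhoE Pinv mulmx_diag_sum; apply: eq_bigr => i _.
  rewrite /row_state -sp_real.
  have -> : row i0 (xrow i0 i P) = row i P by apply/rowP => a; rewrite !mxE perm.tpermL.
  congr (_ *: (_ *m _)).
  by apply/matrixP => a b; rewrite !mxE.
Qed.

Lemma separable_tens m n (ra : 'M[C]_m) (rb : 'M[C]_n) :
  density ra -> density rb -> separable (ra *t rb).
Proof.
move=> ra_density rb_density.
exists 1%N, (fun _ => 1), (fun _ => ra), (fun _ => rb).
by split; rewrite ?big_ord1 ?scale1r.
Qed.

Lemma separable_unitary_conj m n (rho : 'M[C]_(m * n)) Ua Ub :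
  Ua \is unitarymx -> Ub \is unitarymx -> @separable R m n rho ->
  @separable R m n ((Ua *t Ub) *m rho *m adj (Ua *t Ub)).
Proof.
move=> Uau Ubu [k [p [ra [rb [p_ge0 p_sum1 rab_density ->]]]]].
exists k, p, (fun i => Ua *m ra i *m adj Ua), (fun i => Ub *m rb i *m adj Ub).
split => //.
- by move=> i; case: (rab_density i) => ? ?; split; exact: density_unitary_conj.
- rewrite mulmx_sumr mulmx_suml; apply: eq_bigr => i _.
  by rewrite -scalemxAr -scalemxAl adj_tens !tensmx_mul.
Qed.

Lemma separable_expectation_bound m n (i0 : 'I_m) (j0 : 'I_n) (H : 'M[C]_(m * n))
    lo hi rho :
  (forall W1 W2, W1 \is unitarymx -> W2 \is unitarymx ->
     lo <= expectation H (row_state i0 W1 *t row_state j0 W2) <= hi) ->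
  @separable R m n rho -> lo <= expectation H rho <= hi.
Proof.
move=> pure_range [k [p [ra [rb [p_ge0 p_sum1 rab_density ->]]]]].
apply: expectation_conv_bound => // i.
have [da [Wa [da_ge0 da_sum1 Wau ->]]] := density_row_state_decomp i0 (rab_density i).1.
rewrite tensmx_sumZl; apply: expectation_conv_bound => // j.
have [db [Wb [db_ge0 db_sum1 Wbu ->]]] := density_row_state_decomp j0 (rab_density i).2.
rewrite tensmx_sumZr; apply: expectation_conv_bound => // l; exact: pure_range.
Qed.

Lemma unit_row_entry_le1 n (r : 'rV[C]_n) x : r *m adj r = 1%:M -> `|r 0 x| <= 1.
Proof.
move=> /matrixP /(_ 0 0); rewrite !mxE /= mulr1n => r_norm1.
rewrite -(@expr_le1 _ 2) // normCK -r_norm1 (bigD1 x) //= adjE lerDl.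
by apply: sumr_ge0 => j _; rewrite adjE mul_conjC_ge0.
Qed.

Lemma quad_form_norm_bound n (w : 'rV[C]_n) (H : 'M[C]_n) :
  (forall a, `|w 0 a| <= 1) ->
  `|(w *m H *m adj w) 0 0| <= \sum_b \sum_a `|H a b|.
Proof.
move=> w_le1; rewrite mxE (le_trans (ler_norm_sum _ _ _)) //; apply: ler_sum => b _.
rewrite normrM adjE norm_conjC mxE; apply: (le_trans (ler_piMr _ (w_le1 b))) => //.
rewrite (le_trans (ler_norm_sum _ _ _)) //; apply: ler_sum => a _.
by rewrite normrM mulrC ler_piMr.
Qed.

Lemma expectation_row_states_bound m n (i0 : 'I_m) (j0 : 'I_n) (H : 'M[C]_(m * n)) W1 W2 :
  W1 \is unitarymx -> W2 \is unitarymx ->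
  `|expectation H (row_state i0 W1 *t row_state j0 W2)|
    <= complex.Re (\sum_b \sum_a `|H a b|).
Proof.
move=> W1u W2u; rewrite /row_state -tensmx_mul -adj_tens /expectation.
rewrite -mulmxA mxtrace_mulC trace_mx11.
apply: (le_trans (normr_Re_le _)); apply: ler_Re; apply: quad_form_norm_bound => a.
rewrite !mxE normrM; apply: mulr_ile1 => //.
- by have := unit_row_entry_le1 (mxtens_unindex a).1 (row_unitary i0 W1u); rewrite mxE.
- by have := unit_row_entry_le1 (mxtens_unindex a).2 (row_unitary j0 W2u); rewrite mxE.
Qed.

Lemma local_energies_neq0 m n (H rho : 'M[C]_(m * n)) : local_energies H rho !=set0.
Proof. by exists (energy H rho 1%:M 1%:M), 1%:M, 1%:M; split; rewrite ?unitarymx1. Qed.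

Definition sep_energies m n (H : 'M[C]_(m * n)) : set R :=
  [set x | exists rho, separable rho /\ x = expectation H rho].

Lemma inf_sep_energies_opp m n (H : 'M[C]_(m * n)) :
  inf (sep_energies (- H)) = - sup (sep_energies H).
Proof.
congr (- sup _); apply/seteqP; split => x.
  by case=> _ [rho [rho_sep ->]] <-; exists rho; rewrite expectationN opprK.
case=> rho [rho_sep ->]; exists (expectation (- H) rho); first by exists rho.
by rewrite expectationN opprK.
Qed.

Lemma Emin_opp n (H : 'M[C]_n) : Emin (- H) = - Emax H.
Proof.
have eigenvalue_opp (A : 'M[C]_n) a : eigenvalue (- A) a -> eigenvalue A (- a).
  move/eigenvalueP => [v vA v_neq0]; apply/eigenvalueP; exists v => //.
  by rewrite scaleNr -vA mulmxN opprK.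
congr (- sup _); apply/seteqP; split => x.
  by case=> y y_eig <-; rewrite /= raddfN; exact: eigenvalue_opp.
move=> x_eig; exists (- x); last exact: opprK.
by rewrite /= raddfN; apply: eigenvalue_opp; rewrite opprK.
Qed.

Section SeparableWidth.
Variables (m n : nat) (i0 : 'I_m) (j0 : 'I_n) (H : 'M[C]_(m * n)).

Let rho0 := row_state i0 (1%:M : 'M[C]_m) *t row_state j0 (1%:M : 'M[C]_n).
Local Notation S := (sep_energies H).
Local Notation P := (local_energies H rho0).

Lemma energy_rho0 Ua Ub :
  energy H rho0 Ua Ub = expectation H (row_state i0 (adj Ua) *t row_state j0 (adj Ub)).
Proof.
by rewrite /energy adj_tens !tensmx_mul -{1}(adjK Ua) -{1}(adjK Ub) !row_state_conj.
Qed.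

Lemma local_energies_rho0P W1 W2 : W1 \is unitarymx -> W2 \is unitarymx ->
  P (expectation H (row_state i0 W1 *t row_state j0 W2)).
Proof.
by move=> W1u W2u; exists (adj W1), (adj W2); rewrite energy_rho0 !adjK !adj_unitarymx.
Qed.

Lemma local_energies_rho0_norm x :
  P x -> `|x| <= complex.Re (\sum_b \sum_a `|H a b|).
Proof.
case=> Ua [Ub [Uau Ubu ->]]; rewrite energy_rho0.
by apply: expectation_row_states_bound; exact: adj_unitarymx.
Qed.

Lemma local_energies_rho0_bounded : has_ubound P /\ has_lbound P.
Proof.
pose B := complex.Re (\sum_b \sum_a `|H a b|).
by split; [exists B | exists (- B)] => x /local_energies_rho0_norm; rewrite ler_norml => /andP[].
Qed.

Lemma local_energies_sub_sep rho : @separable R m n rho -> local_energies H rho `<=` S.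
Proof.
move=> rho_sep _ [Ua [Ub [Uau Ubu ->]]].
by exists ((Ua *t Ub) *m rho *m adj (Ua *t Ub)); split; first exact: separable_unitary_conj.
Qed.

Lemma rho0_separable : @separable R m n rho0.
Proof. by apply: separable_tens; apply: row_state_density; exact: unitarymx1. Qed.

Lemma local_energies_rho0_sub_sep : P `<=` S.
Proof. exact: local_energies_sub_sep rho0_separable. Qed.

Lemma sep_energies_range x : S x -> inf P <= x <= sup P.
Proof.
have [P_ub P_lb] := local_energies_rho0_bounded.
move=> -[rho [rho_sep ->]]; apply: separable_expectation_bound rho_sep => W1 W2 W1u W2u.
by apply/andP; split; [apply: ge_inf | apply: ub_le_sup] => //;
  exact: local_energies_rho0P.
Qed.

Lemma sep_energies_neq0 : S !=set0.
Proof.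
by have [x /local_energies_rho0_sub_sep Sx] := local_energies_neq0 H rho0; exists x.
Qed.

Lemma sup_sep_energies : sup S = sup P.
Proof.
apply/le_anti/andP; split.
  by apply: ge_sup; [exact: sep_energies_neq0 | move=> x /sep_energies_range /andP[]].
apply: ge_sup; first exact: local_energies_neq0.
move=> x /local_energies_rho0_sub_sep; apply: ub_le_sup.
by exists (sup P) => y /sep_energies_range /andP[].
Qed.

Lemma inf_sep_energies : inf S = inf P.
Proof.
apply/le_anti/andP; split.
  apply: lb_le_inf; first exact: local_energies_neq0.
  move=> x /local_energies_rho0_sub_sep; apply: ge_inf.
  by exists (inf P) => y /sep_energies_range /andP[].
by apply: lb_le_inf; [exact: sep_energies_neq0 | move=> x /sep_energies_range /andP[]].
Qed.

Lemma CP_sep_le rho : @separable R m n rho -> CP rho H <= sup S - inf S.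
Proof.
move=> rho_sep; rewrite sup_sep_energies inf_sep_energies; apply: lerB.
  apply: ge_sup; first exact: local_energies_neq0.
  by move=> x /(local_energies_sub_sep rho_sep) /sep_energies_range /andP[].
apply: lb_le_inf; first exact: local_energies_neq0.
by move=> x /(local_energies_sub_sep rho_sep) /sep_energies_range /andP[].
Qed.

Lemma CP1_sep_width : CP1 H = sup S - inf S.
Proof.
apply: sup_attained; first by exists rho0; split; first exact: rho0_separable; rewrite /CP sup_sep_energies inf_sep_energies.
by move=> _ [rho [rho_sep ->]]; exact: CP_sep_le.
Qed.

End SeparableWidth.

End Quantum.

Theorem theorem1 (R : realType) (m n : nat) (Hm : (0 < m)%N) (Hn : (0 < n)%N)
  (H : 'M[R[i]]_(m * n)) :
  hermitian_op H ->
  CP1 H = (Emax H - Emin H) - (DeltaESep H + DeltaESep (- H)).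
Proof.
move=> _.
rewrite (CP1_sep_width (Ordinal Hm) (Ordinal Hn)) /DeltaESep.
rewrite -/(sep_energies H) -/(sep_energies (- H)) inf_sep_energies_opp Emin_opp.
lra.
Qed.
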